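(* Let $(\mathcal I,T)$ be a system of class $\mathcal{DRIS}(\gamma)$ for some $\gamma>0$. Then its block system belongs to the Good Class. Consequently $\mathcal{DRIS}=\bigcup_{\gamma>0}\mathcal{DRIS}(\gamma)\subset\mathcal{DRBGC}$.
   Context: Let $\mathcal I=[0,1]$. A binary dynamical system is given by $c\in]0,1[$ and two $C^2$ bijections, $a:[0,1]\to[0,c]$ and $b:[0,1]\to[c,1]$ (the inverse branches). The map $T$ equals $a^{-1}$ on $]0,c[$ and $b^{-1}$ on $]c,1[$. Class $\mathcal{DR}$: $a$ is increasing, $b$ is decreasing, $a(0)=0$, $a(1)=c$, $b(0)=1$, $b(1)=c$, $a'>0$ and $b'<0$ on $[0,1]$, and $a'(x)<1$, $b'(x)>-1$ for $x\in]0,1]$. Class $\mathcal{DRI}$: class $\mathcal{DR}$ with moreover $a'(0)=1$. Let $q(n)=a^n(1)$. Block system: for $m\ge1$, $\mathcal J_m=]q(m),q(m-1)[$ and $g_m=a^{m-1}\circ b$. The block map $\widehat T$ equals $g_m^{-1}$ on $\mathcal J_m$. Let $\mathcal G^n$ be the set of compositions $g_{m_1}\circ\cdots\circ g_{m_n}$. The block system is in the Good Class if: - (a) the Dirichlet series $\sum_{m\ge1}|\mathcal J_m|^s$ has abscissa of convergence $<1$; - (b) $\limsup_n\eta_n<1$, where $\eta_n=\sup\{|g'(x)|:g\in\mathcal G^n,x\in\mathcal I\}$; - (c) there is $L\ge1$ with $L^{-1}\le|g_m'(x)/g_m'(y)|\le L$ for all $m\ge1$ and $x,y\in\mathcal I$.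 $\mathcal{DRBGC}$ is the class of $\mathcal{DRI}$ systems whose block system is in the Good Class. $\mathcal{SV}_0^*$ denotes the set of positive functions $V\in C^1(]0,1])$ such that: - $V$ is slowly varying at $0$, i.e. $V(tx)/V(x)\to1$ as $x\to0^+$ for every $t>0$; - $xV'(x)/V(x)\to0$ as $x\to0^+$. For $\gamma>0$, $\mathcal{DRIS}(\gamma)$ is the class of $\mathcal{DRI}$ systems such that $a(x)=x-u(x)$, where $u\in C^2([0,1])$, $u(0)=u'(0)=0$, $u'(x)\in[0,1]$, and $u'(x)=x^\gamma V(x)$ on $]0,1]$ for some $V\in\mathcal{SV}_0^*$. *)

From Stdlib Require Import Reals List.
From Coquelicot Require Import Coquelicot.
Open Scope R_scope.

(* f is C^2 on [0,1]: realised as C^2 on an open neighbourhood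
   ]-eps, 1+eps[ of [0,1] (equivalent in dimension one, by extension). *)
Definition C2_on_01 (f : R -> R) : Prop :=
  exists eps : R, 0 < eps /\
    forall x, -eps < x < 1 + eps ->
      ex_derive f x /\ ex_derive (Derive f) x /\
      continuous (Derive (Derive f)) x.

(* f is C^1 on ]0,1]: C^1 on ]0, 1+eps[ for some eps > 0. *)
Definition C1_on_0_1 (f : R -> R) : Prop :=
  exists eps : R, 0 < eps /\
    forall x, 0 < x < 1 + eps -> ex_derive f x /\ continuous (Derive f) x.

Definition bij_on (f : R -> R) (lo0 hi0 lo1 hi1 : R) : Prop :=
  (forall x, lo0 <= x <= hi0 -> lo1 <= f x <= hi1) /\
  (forall y, lo1 <= y <= hi1 ->
     exists x, lo0 <= x <= hi0 /\ f x = y /\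
       forall x', lo0 <= x' <= hi0 -> f x' = y -> x' = x).

(* Class DR, given by c and the inverse branches a, b. *)
Definition is_DR (c : R) (a b : R -> R) : Prop :=
  0 < c < 1 /\
  C2_on_01 a /\ C2_on_01 b /\
  bij_on a 0 1 0 c /\ bij_on b 0 1 c 1 /\
  (forall x y, 0 <= x <= 1 -> 0 <= y <= 1 -> x < y -> a x < a y) /\
  (forall x y, 0 <= x <= 1 -> 0 <= y <= 1 -> x < y -> b y < b x) /\
  a 0 = 0 /\ a 1 = c /\ b 0 = 1 /\ b 1 = c /\
  (forall x, 0 <= x <= 1 -> 0 < Derive a x /\ Derive b x < 0) /\
  (forall x, 0 < x <= 1 -> Derive a x < 1 /\ -1 < Derive b x).

Definition is_DRI (c : R) (a b : R -> R) : Prop :=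
  is_DR c a b /\ Derive a 0 = 1.

Definition slowly_varying_0 (V : R -> R) : Prop :=
  forall t, 0 < t ->
    filterlim (fun x => V (t * x) / V x) (at_right 0) (locally 1).

Definition SV0_star (V : R -> R) : Prop :=
  (forall x, 0 < x <= 1 -> 0 < V x) /\
  C1_on_0_1 V /\
  slowly_varying_0 V /\
  filterlim (fun x => x * Derive V x / V x) (at_right 0) (locally 0).

Definition is_DRIS (gamma c : R) (a b : R -> R) : Prop :=
  is_DRI c a b /\
  exists u V : R -> R,
    (forall x, 0 <= x <= 1 -> a x = x - u x) /\
    C2_on_01 u /\ u 0 = 0 /\ Derive u 0 = 0 /\
    (forall x, 0 <= x <= 1 -> 0 <= Derive u x <= 1) /\
    SV0_star V /\
    (forall x, 0 < x <= 1 -> Derive u x = Rpower x gamma * V x).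

Definition q (a : R -> R) (n : nat) : R := Nat.iter n a 1.

Definition J_len (a : R -> R) (m : nat) : R := q a (m - 1)%nat - q a m.

Definition g (a b : R -> R) (m : nat) : R -> R :=
  fun x => Nat.iter (m - 1)%nat a (b x).

Definition g_comp (a b : R -> R) (l : list nat) : R -> R :=
  fold_right (fun m h => fun x => g a b m (h x)) (fun x => x) l.

Definition eta (a b : R -> R) (n : nat) : Rbar :=
  Lub_Rbar (fun y => exists (l : list nat) (x : R),
    length l = n /\ List.Forall (fun m => (1 <= m)%nat) l /\
    0 <= x <= 1 /\ y = Rabs (Derive (g_comp a b l) x)).

Definition Rbar_limsup (u : nat -> Rbar) : Rbar :=
  Inf_seq (fun N => Sup_seq (fun k => u (N + k)%nat)).

Definition abscissa_J (a : R -> R) : Rbar :=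
  Glb_Rbar (fun s => ex_series (fun k => Rpower (J_len a (S k)) s)).

Definition good_class (a b : R -> R) : Prop :=
  Rbar_lt (abscissa_J a) 1 /\
  Rbar_lt (Rbar_limsup (eta a b)) 1 /\
  (exists L : R, 1 <= L /\
     forall (m : nat) (x y : R), (1 <= m)%nat -> 0 <= x <= 1 -> 0 <= y <= 1 ->
       / L <= Rabs (Derive (g a b m) x / Derive (g a b m) y) <= L).

Definition is_DRBGC (c : R) (a b : R -> R) : Prop :=
  is_DRI c a b /\ good_class a b.

From Stdlib Require Import Reals List Lra Lia.
From Coquelicot Require Import Coquelicot.
Open Scope R_scope.

(* Condition (b): a block [g_m] with [m >= 2] applies [a] at least once on [c, 1], and [g_1 = b]
   maps into [c, 1]; on this interval [|a'|] and [|b'|] are at most some [th < 1], so every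
   composition of two blocks contracts by [th].
   Condition (c): [log a'] is Lipschitz, and the orbits under [a] of two points of [[c, 1]] visit
   the same intervals [J_k], of total length at most [1]; hence the distortion of [a^(m-1)] is
   bounded by [exp K] uniformly in [m].
   Condition (a): [x V'(x) / V(x) -> 0] makes [V(x) / x] nonincreasing near [0], so
   [u(x) >= B x^P] there and [|J_k| = u(q_k) >= B q_k^P]; with [s = 1 - 1/(2P)], each [|J_k|^s] is
   then dominated by a multiple of [sqrt q_k - sqrt q_(k+1)], a telescoping series. *)

Lemma exp_le_exp x y : x <= y -> exp x <= exp y.
Proof. intros [h|h]; [left; apply exp_increasing; exact h|rewrite h; lra]. Qed.

Lemma is_derive_comp_R (f h : R -> R) x df dh :
  is_derive f (h x) df -> is_derive h x dh -> is_derive (fun y => f (h y)) x (df * dh).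
Proof.
  intros Hf Hh. rewrite Rmult_comm. exact (is_derive_comp f h x df dh Hf Hh).
Qed.

Fixpoint iter_deriv (a da : R -> R) (n : nat) (y : R) : R :=
  match n with O => 1 | S n => da (Nat.iter n a y) * iter_deriv a da n y end.

Section Iterates.

Variables a da : R -> R.
Hypothesis a_maps : forall x, 0 <= x <= 1 -> 0 <= a x <= 1.

Lemma iter_maps n y : 0 <= y <= 1 -> 0 <= Nat.iter n a y <= 1.
Proof. intros Hy; induction n; simpl; auto. Qed.

Lemma q_bounds n : 0 <= q a n <= 1.
Proof. apply iter_maps; lra. Qed.

Lemma is_derive_iter :
  (forall x, 0 <= x <= 1 -> is_derive a x (da x)) ->
  forall n y, 0 <= y <= 1 -> is_derive (Nat.iter n a) y (iter_deriv a da n y).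
Proof.
  intros Hda n y Hy; induction n as [|n IH]; simpl.
  - apply (is_derive_ext (fun x => x)); [reflexivity|]. auto_derive; auto.
  - apply (is_derive_comp_R a (Nat.iter n a)); auto using iter_maps.
Qed.

Hypothesis da_pos : forall x, 0 <= x <= 1 -> 0 < da x.

Lemma iter_deriv_pos n y : 0 <= y <= 1 -> 0 < iter_deriv a da n y.
Proof.
  intros Hy; induction n; simpl; [lra|].
  apply Rmult_lt_0_compat; auto using iter_maps.
Qed.

Section Contracting.

Hypothesis da_le_1 : forall x, 0 <= x <= 1 -> da x <= 1.

Lemma iter_deriv_le_1 n y : 0 <= y <= 1 -> iter_deriv a da n y <= 1.
Proof.
  intros Hy; induction n; simpl; [lra|].
  pose proof (da_le_1 _ (iter_maps n y Hy)); pose proof (iter_deriv_pos n y Hy).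
  apply Rle_trans with (1 * iter_deriv a da n y); [apply Rmult_le_compat_r|]; lra.
Qed.

Lemma iter_deriv_S_le n y : 0 <= y <= 1 -> iter_deriv a da (S n) y <= da y.
Proof.
  intros Hy; induction n as [|n IH]; [simpl; lra|].
  change (iter_deriv a da (S (S n)) y) with (da (Nat.iter (S n) a y) * iter_deriv a da (S n) y).
  pose proof (da_le_1 _ (iter_maps (S n) y Hy)); pose proof (iter_deriv_pos (S n) y Hy).
  apply Rle_trans with (1 * iter_deriv a da (S n) y); [apply Rmult_le_compat_r|]; lra.
Qed.

End Contracting.

Hypothesis a_mono : forall x y, 0 <= x <= 1 -> 0 <= y <= 1 -> x <= y -> a x <= a y.

Lemma iter_in_block n y : q a 1 <= y <= 1 -> q a (S n) <= Nat.iter n a y <= q a n.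
Proof.
  intros Hy; induction n as [|n IH]; [unfold q in *; simpl in *; lra|].
  pose proof (q_bounds (S n)); pose proof (q_bounds n).
  change (a (q a (S n)) <= a (Nat.iter n a y) <= a (q a n)).
  split; apply a_mono; lra.
Qed.

(* The orbits of [y] and [z] visit the same intervals [[q (k+1), q k]], whose lengths add up
   to [1 - q n]. *)
Lemma iter_deriv_distortion (K : R) :
  0 <= K ->
  (forall p r, 0 <= p <= 1 -> 0 <= r <= 1 -> da p <= da r * exp (K * Rabs (p - r))) ->
  forall n y z, q a 1 <= y <= 1 -> q a 1 <= z <= 1 ->
  iter_deriv a da n y <= iter_deriv a da n z * exp (K * (1 - q a n)).
Proof.
  intros HK Hlog n; induction n as [|n IH]; intros y z Hy Hz.
  - unfold q; simpl. rewrite Rminus_diag, Rmult_0_r, exp_0. lra.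
  - pose proof (q_bounds 1).
    destruct (iter_in_block n y Hy), (iter_in_block n z Hz).
    assert (Iy : 0 <= Nat.iter n a y <= 1) by (pose proof (q_bounds (S n)); pose proof (q_bounds n); lra).
    assert (Iz : 0 <= Nat.iter n a z <= 1) by (pose proof (q_bounds (S n)); pose proof (q_bounds n); lra).
    assert (Hstep : exp (K * Rabs (Nat.iter n a y - Nat.iter n a z)) <= exp (K * (q a n - q a (S n)))).
    { apply exp_le_exp, Rmult_le_compat_l; [lra|]. apply Rabs_le; lra. }
    pose proof (Hlog _ _ Iy Iz). pose proof (IH y z Hy Hz).
    pose proof (da_pos _ Iy). pose proof (da_pos _ Iz). pose proof (iter_deriv_pos n y (ltac:(lra) : 0 <= y <= 1)).
    pose proof (exp_pos (K * Rabs (Nat.iter n a y - Nat.iter n a z))).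
    simpl iter_deriv.
    replace (K * (1 - q a (S n))) with (K * (q a n - q a (S n)) + K * (1 - q a n)) by ring.
    rewrite exp_plus.
    apply Rle_trans with
      ((da (Nat.iter n a z) * exp (K * (q a n - q a (S n)))) * (iter_deriv a da n z * exp (K * (1 - q a n)))).
    + apply Rmult_le_compat; try lra.
      apply Rle_trans with (da (Nat.iter n a z) * exp (K * Rabs (Nat.iter n a y - Nat.iter n a z))); [lra|].
      apply Rmult_le_compat_l; lra.
    + right; ring.
Qed.

End Iterates.

Definition g_deriv (a b da db : R -> R) (m : nat) (y : R) : R :=
  iter_deriv a da (m - 1) (b y) * db y.

Section BlockMaps.

Variables (a b da db : R -> R) (c : R).
Hypothesis a_maps : forall x, 0 <= x <= 1 -> 0 <= a x <= 1.
Hypothesis b_maps : forall x, 0 <= x <= 1 -> c <= b x <= 1.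
Hypothesis c_nonneg : 0 <= c.
Hypothesis a_deriv : forall x, 0 <= x <= 1 -> is_derive a x (da x).
Hypothesis b_deriv : forall x, 0 <= x <= 1 -> is_derive b x (db x).

Let b_maps01 y : 0 <= y <= 1 -> 0 <= b y <= 1.
Proof. intros Hy; pose proof (b_maps y Hy); lra. Qed.

Lemma g_maps m y : 0 <= y <= 1 -> 0 <= g a b m y <= 1.
Proof. intros Hy; apply iter_maps; auto. Qed.

Lemma g_comp_maps l x : 0 <= x <= 1 -> 0 <= g_comp a b l x <= 1.
Proof. intros Hx; induction l; simpl; auto using g_maps. Qed.

Lemma is_derive_g m y : 0 <= y <= 1 -> is_derive (g a b m) y (g_deriv a b da db m y).
Proof.
  intros Hy; apply (is_derive_comp_R (Nat.iter (m - 1) a) b); auto.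
  apply is_derive_iter; auto.
Qed.

Hypothesis da_bounds : forall x, 0 <= x <= 1 -> 0 < da x <= 1.
Hypothesis db_bounds : forall x, 0 <= x <= 1 -> -1 <= db x < 0.

Let da_pos x : 0 <= x <= 1 -> 0 < da x.
Proof. apply da_bounds. Qed.

Let da_le_1 x : 0 <= x <= 1 -> da x <= 1.
Proof. apply da_bounds. Qed.

Lemma Rabs_g_deriv m y : 0 <= y <= 1 ->
  Rabs (g_deriv a b da db m y) = iter_deriv a da (m - 1) (b y) * - db y.
Proof.
  intros Hy; unfold g_deriv.
  pose proof (iter_deriv_pos a da a_maps da_pos (m - 1) (b y) (b_maps01 y Hy)).
  pose proof (db_bounds y Hy).
  rewrite Rabs_mult, Rabs_pos_eq, Rabs_left; lra.
Qed.

Lemma Rabs_g_deriv_le_1 m y : 0 <= y <= 1 -> Rabs (g_deriv a b da db m y) <= 1.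
Proof.
  intros Hy; rewrite Rabs_g_deriv by exact Hy.
  pose proof (iter_deriv_pos a da a_maps da_pos (m - 1) (b y) (b_maps01 y Hy)).
  pose proof (iter_deriv_le_1 a da a_maps da_pos da_le_1 (m - 1) (b y) (b_maps01 y Hy)).
  pose proof (db_bounds y Hy).
  apply Rle_trans with (1 * - db y); [apply Rmult_le_compat_r|]; lra.
Qed.

Lemma g_comp_derive_le_1 l x : 0 <= x <= 1 ->
  exists D, is_derive (g_comp a b l) x D /\ Rabs D <= 1.
Proof.
  intros Hx; induction l as [|m l [D [HD HD1]]]; simpl.
  - exists 1; split; [auto_derive; auto|rewrite Rabs_R1; lra].
  - exists (g_deriv a b da db m (g_comp a b l x) * D); split.
    + apply (is_derive_comp_R (g a b m)); auto using is_derive_g, g_comp_maps.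
    + rewrite Rabs_mult, <- (Rmult_1_r 1).
      apply Rmult_le_compat; auto using Rabs_pos, Rabs_g_deriv_le_1, g_comp_maps.
Qed.

Variable th : R.
Hypothesis da_le_th : forall x, c <= x <= 1 -> da x <= th.
Hypothesis db_ge_th : forall x, c <= x <= 1 -> - db x <= th.

Lemma Rabs_g_deriv_le_th m y : 0 <= y <= 1 -> (2 <= m)%nat \/ c <= y ->
  Rabs (g_deriv a b da db m y) <= th.
Proof.
  intros Hy Hmy; rewrite Rabs_g_deriv by exact Hy.
  pose proof (b_maps y Hy) as By.
  pose proof (iter_deriv_pos a da a_maps da_pos (m - 1) (b y) (b_maps01 y Hy)).
  pose proof (db_bounds y Hy).
  destruct (Compare_dec.le_lt_dec 2 m) as [Hm|Hm].
  - replace (m - 1)%nat with (S (m - 2)) in * by lia.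
    pose proof (iter_deriv_S_le a da a_maps da_pos da_le_1 (m - 2) (b y) (b_maps01 y Hy)).
    pose proof (da_le_th (b y) By).
    apply Rle_trans with (iter_deriv a da (S (m - 2)) (b y) * 1); [apply Rmult_le_compat_l|]; lra.
  - destruct Hmy as [|Hcy]; [lia|].
    replace (m - 1)%nat with O by lia; simpl.
    pose proof (db_ge_th y (conj Hcy (proj2 Hy))); lra.
Qed.

(* A composition of two blocks contracts: either one of them goes through [a] at least once,
   or the inner one is [b], which maps into [c, 1] where [|b'| <= th]. *)
Lemma Rabs_g_deriv_pair_le_th m1 m2 y : 0 <= y <= 1 ->
  Rabs (g_deriv a b da db m1 (g a b m2 y) * g_deriv a b da db m2 y) <= th.
Proof.
  intros Hy; rewrite Rabs_mult.
  pose proof (g_maps m2 y Hy) as Gy.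
  pose proof (Rabs_pos (g_deriv a b da db m1 (g a b m2 y))).
  pose proof (Rabs_pos (g_deriv a b da db m2 y)).
  destruct (Compare_dec.le_lt_dec 2 m1) as [H1|H1]; [|destruct (Compare_dec.le_lt_dec 2 m2) as [H2|H2]].
  - pose proof (Rabs_g_deriv_le_th m1 _ Gy (or_introl H1)).
    pose proof (Rabs_g_deriv_le_1 m2 y Hy).
    apply Rle_trans with (th * 1); [apply Rmult_le_compat|]; nra.
  - pose proof (Rabs_g_deriv_le_1 m1 _ Gy).
    pose proof (Rabs_g_deriv_le_th m2 y Hy (or_introl H2)).
    apply Rle_trans with (1 * th); [apply Rmult_le_compat|]; nra.
  - assert (Hc : c <= g a b m2 y).
    { unfold g; replace (m2 - 1)%nat with O by lia; apply b_maps, Hy. }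
    pose proof (Rabs_g_deriv_le_th m1 _ Gy (or_intror Hc)).
    pose proof (Rabs_g_deriv_le_1 m2 y Hy).
    apply Rle_trans with (th * 1); [apply Rmult_le_compat|]; nra.
Qed.

Lemma eta_le_th n : (2 <= n)%nat -> Rbar_le (eta a b n) th.
Proof.
  intros Hn; unfold eta.
  apply (proj2 (Lub_Rbar_correct _)). intros ? (l & x & Hlen & _ & Hx & ->).
  destruct l as [|m1 [|m2 l]]; simpl in Hlen; try lia.
  destruct (g_comp_derive_le_1 l x Hx) as [D [HD HD1]].
  set (y := g_comp a b l x) in *.
  assert (Hy : 0 <= y <= 1) by apply g_comp_maps, Hx.
  assert (Hder : is_derive (g_comp a b (m1 :: m2 :: l)) x
     (g_deriv a b da db m1 (g a b m2 y) * g_deriv a b da db m2 y * D)).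
  { rewrite Rmult_assoc.
    apply (is_derive_comp_R (g a b m1)); [apply is_derive_g, g_maps, Hy|].
    apply (is_derive_comp_R (g a b m2)); [apply is_derive_g, Hy|exact HD]. }
  rewrite (is_derive_unique _ _ _ Hder), Rabs_mult; simpl.
  pose proof (Rabs_g_deriv_pair_le_th m1 m2 y Hy). pose proof (Rabs_pos D).
  apply Rle_trans with (th * 1); [apply Rmult_le_compat; auto using Rabs_pos|]; lra.
Qed.

End BlockMaps.

Lemma Inf_seq_le_term (v : nat -> Rbar) n : Rbar_le (Inf_seq v) (v n).
Proof.
  pose proof (Inf_seq_correct v) as C.
  destruct (Inf_seq v) as [l| |]; simpl in *.
  all: destruct (v n) as [x| |] eqn:E; simpl; auto.
  - apply Rnot_lt_le; intros Hlt.
    destruct (C (mkposreal (l - x) ltac:(lra))) as [Hlow _].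
    specialize (Hlow n); rewrite E in Hlow; simpl in Hlow; lra.
  - destruct (C (mkposreal 1 Rlt_0_1)) as [Hlow _].
    specialize (Hlow n); rewrite E in Hlow; exact Hlow.
  - specialize (C x n); rewrite E in C; simpl in C; lra.
  - specialize (C 0 n); rewrite E in C; exact C.
Qed.

Lemma Rbar_limsup_le (u : nat -> Rbar) (N : nat) (th : R) :
  (forall n, (N <= n)%nat -> Rbar_le (u n) th) -> Rbar_le (Rbar_limsup u) th.
Proof.
  intros Hu. apply Rbar_le_trans with (1 := Inf_seq_le_term _ N).
  apply Rbar_le_trans with (Sup_seq (fun _ => Finite th)).
  - apply Sup_seq_le; intros k; apply Hu; lia.
  - rewrite (is_sup_seq_unique _ th); [apply Rbar_le_refl|].
    intros eps; split; [intros _|exists O]; simpl; destruct eps; simpl; lra.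
Qed.

Lemma Rabs_ratio_bounds (f : R -> R) (D : R -> Prop) (L : R) :
  (forall x, D x -> f x <> 0) ->
  (forall x y, D x -> D y -> Rabs (f x / f y) <= L) ->
  forall x y, D x -> D y -> / L <= Rabs (f x / f y) <= L.
Proof.
  intros Hnz Hup x y Hx Hy; split; [|auto].
  assert (Hpos : 0 < Rabs (f y / f x)).
  { apply Rabs_pos_lt; unfold Rdiv; apply Rmult_integral_contrapositive.
    split; [|apply Rinv_neq_0_compat]; auto. }
  replace (Rabs (f x / f y)) with (/ Rabs (f y / f x)).
  - apply Rinv_le_contravar; auto.
  - rewrite <- Rabs_inv; f_equal; field; auto.
Qed.

(* [f p <= f r + M |p - r| <= f r (1 + M/alpha |p - r|)], and [1 + t <= exp t]. *)
Lemma log_lipschitz_of_lipschitz (f : R -> R) (D : R -> Prop) (M alpha : R) :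
  0 <= M -> 0 < alpha -> (forall x, D x -> alpha <= f x) ->
  (forall p r, D p -> D r -> Rabs (f p - f r) <= M * Rabs (p - r)) ->
  forall p r, D p -> D r -> f p <= f r * exp (M / alpha * Rabs (p - r)).
Proof.
  intros HM Ha Hlow Hlip p r Hp Hr.
  pose proof (Hlow r Hr); pose proof (Hlip p r Hp Hr).
  pose proof (Rle_abs (f p - f r)); pose proof (Rabs_pos (p - r)).
  apply Rle_trans with (f r * (1 + M / alpha * Rabs (p - r))).
  - assert (M * Rabs (p - r) <= f r * (M / alpha * Rabs (p - r))).
    { replace (f r * (M / alpha * Rabs (p - r))) with (f r / alpha * (M * Rabs (p - r))) by (field; lra).
      pose proof (Rmult_le_pos _ _ HM (Rabs_pos (p - r))).
      assert (1 <= f r / alpha) by (apply Rle_div_r; lra).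
      nra. }
    lra.
  - apply Rmult_le_compat_l; [lra|apply exp_ineq1_le].
Qed.

Section Distortion.

Variables (a b da db : R -> R) (c K beta : R).
Hypothesis a_maps : forall x, 0 <= x <= 1 -> 0 <= a x <= 1.
Hypothesis a_mono : forall x y, 0 <= x <= 1 -> 0 <= y <= 1 -> x <= y -> a x <= a y.
Hypothesis a_1 : a 1 = c.
Hypothesis b_maps : forall x, 0 <= x <= 1 -> c <= b x <= 1.
Hypothesis a_deriv : forall x, 0 <= x <= 1 -> is_derive a x (da x).
Hypothesis b_deriv : forall x, 0 <= x <= 1 -> is_derive b x (db x).
Hypothesis da_pos : forall x, 0 <= x <= 1 -> 0 < da x.
Hypothesis K_nonneg : 0 <= K.
Hypothesis da_log_lipschitz :
  forall p r, 0 <= p <= 1 -> 0 <= r <= 1 -> da p <= da r * exp (K * Rabs (p - r)).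
Hypothesis db_bounds : forall x, 0 <= x <= 1 -> beta <= - db x <= 1.
Hypothesis beta_pos : 0 < beta.

Lemma Rabs_g_deriv_ratio_le m x y : 0 <= x <= 1 -> 0 <= y <= 1 ->
  Rabs (g_deriv a b da db m x / g_deriv a b da db m y) <= exp K / beta.
Proof.
  intros Hx Hy.
  pose proof (b_maps x Hx) as Bx; pose proof (b_maps y Hy) as By.
  assert (Hc : q a 1 = c) by exact a_1.
  set (Px := iter_deriv a da (m - 1) (b x)); set (Py := iter_deriv a da (m - 1) (b y)).
  assert (0 < Px) by (apply iter_deriv_pos; auto; pose proof (q_bounds a a_maps 1); lra).
  assert (0 < Py) by (apply iter_deriv_pos; auto; pose proof (q_bounds a a_maps 1); lra).
  assert (HP : Px <= Py * exp K).
  { apply Rle_trans with (Py * exp (K * (1 - q a (m - 1)))).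
    - apply iter_deriv_distortion; auto; lra.
    - pose proof (q_bounds a a_maps (m - 1)).
      apply Rmult_le_compat_l; [lra|apply exp_le_exp].
      pose proof (Rmult_le_pos K (q a (m - 1)) K_nonneg (proj1 H1)). nra. }
  pose proof (db_bounds x Hx); pose proof (db_bounds y Hy); pose proof (exp_pos K).
  unfold g_deriv; fold Px Py.
  replace (Px * db x / (Py * db y)) with ((Px / Py) * (- db x / - db y)) by (field; lra).
  rewrite Rabs_mult, !Rabs_pos_eq by (apply Rlt_le, Rdiv_lt_0_compat; lra).
  replace (exp K / beta) with ((exp K) * (1 / beta)) by (field; lra).
  apply Rmult_le_compat; try (apply Rlt_le, Rdiv_lt_0_compat; lra).
  - apply Rle_div_l; lra.
  - unfold Rdiv; apply Rmult_le_compat; try lra.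
    + left; apply Rinv_0_lt_compat; lra.
    + apply Rinv_le_contravar; lra.
Qed.

Lemma g_bounded_distortion : exists L : R, 1 <= L /\
  forall (m : nat) (x y : R), (1 <= m)%nat -> 0 <= x <= 1 -> 0 <= y <= 1 ->
    / L <= Rabs (Derive (g a b m) x / Derive (g a b m) y) <= L.
Proof.
  assert (Hc : 0 <= c) by (pose proof (b_maps 0 ltac:(lra)); pose proof (a_maps 1 ltac:(lra)); lra).
  assert (HD : forall m x, 0 <= x <= 1 -> Derive (g a b m) x = g_deriv a b da db m x).
  { intros m x Hx; apply is_derive_unique, (is_derive_g a b da db c); auto. }
  exists (exp K / beta); split.
  - pose proof (db_bounds 0 ltac:(lra)).
    apply Rle_div_r; [lra|]. rewrite Rmult_1_l.
    apply Rle_trans with 1; [lra|]. rewrite <- exp_0; apply exp_le_exp; lra.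
  - intros m x y _.
    apply (Rabs_ratio_bounds (Derive (g a b m)) (fun x => 0 <= x <= 1)).
    + intros z Hz; rewrite HD by exact Hz; unfold g_deriv.
      pose proof (db_bounds z Hz).
      apply Rmult_integral_contrapositive; split; [|lra].
      apply Rgt_not_eq, iter_deriv_pos; auto; pose proof (b_maps z Hz); lra.
    + intros x' y' Hx' Hy'; rewrite !HD by assumption; apply Rabs_g_deriv_ratio_le; auto.
Qed.

End Distortion.

Lemma mean_value (f df : R -> R) (lo hi : R) : lo <= hi ->
  (forall x, lo <= x <= hi -> is_derive f x (df x)) ->
  exists xi, lo <= xi <= hi /\ f hi - f lo = df xi * (hi - lo).
Proof.
  intros Hle Hd.
  destruct Hle as [Hlt|<-]; [|exists lo; split; [lra|ring]].
  destruct (MVT_cor3 f df lo hi Hlt) as (xi & H1 & H2 & H3);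
    [intros x Hx1 Hx2; apply is_derive_Reals, Hd; lra|].
  exists xi; split; lra.
Qed.

Lemma nondecreasing_of_derive_nonneg (f df : R -> R) (lo hi : R) :
  (forall x, lo <= x <= hi -> is_derive f x (df x)) ->
  (forall x, lo <= x <= hi -> 0 <= df x) ->
  forall x y, lo <= x -> x <= y -> y <= hi -> f x <= f y.
Proof.
  intros Hd Hpos x y H1 H2 H3.
  destruct (mean_value f df x y H2) as [xi [Hxi Heq]]; [intros z Hz; apply Hd; lra|].
  pose proof (Rmult_le_pos _ _ (Hpos xi ltac:(lra)) (ltac:(lra) : 0 <= y - x)); lra.
Qed.

Lemma gap_div_sqrt_le (x y : R) : 0 <= y -> y <= x -> 0 < x ->
  (x - y) / sqrt x <= 2 * (sqrt x - sqrt y).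
Proof.
  intros Hy Hyx Hx.
  pose proof (sqrt_lt_R0 x Hx); pose proof (sqrt_pos y); pose proof (sqrt_le_1_alt _ _ Hyx).
  apply Rle_div_l; [lra|].
  rewrite <- (sqrt_sqrt x) at 1 by lra. rewrite <- (sqrt_sqrt y) at 1 by lra.
  nra.
Qed.

Lemma Rpower_le_of_power_lower_bound (w r B : R) (P : nat) :
  (1 <= P)%nat -> 0 < B -> 0 < r -> B * r ^ P <= w ->
  Rpower w (1 - / (2 * INR P)) <= Rpower B (- / (2 * INR P)) * (w / sqrt r).
Proof.
  intros HP HB Hr Hw.
  assert (HINR : 1 <= INR P) by (apply (le_INR 1); lia).
  assert (Hw0 : 0 < w) by (pose proof (pow_lt r P Hr); nra).
  assert (Hln : ln B + INR P * ln r <= ln w).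
  { rewrite <- ln_pow, <- ln_mult by (try apply pow_lt; lra).
    apply ln_le; [apply Rmult_lt_0_compat; [lra|apply pow_lt; lra]|exact Hw]. }
  unfold Rpower.
  replace ((1 - / (2 * INR P)) * ln w) with (ln w + - / (2 * INR P) * ln w) by ring.
  rewrite exp_plus, exp_ln by lra.
  apply Rle_trans with (w * exp (- / (2 * INR P) * ln B + - (/ 2 * ln r))).
  - apply Rmult_le_compat_l; [lra|apply exp_le_exp].
    replace (- (/ 2 * ln r)) with (- / (2 * INR P) * (INR P * ln r)) by (field; lra).
    rewrite <- Rmult_plus_distr_l.
    apply Rmult_le_compat_neg_l; [|lra].
    assert (0 < / (2 * INR P)) by (apply Rinv_0_lt_compat; lra); lra.
  - rewrite exp_plus, exp_Ropp.
    change (exp (/ 2 * ln r)) with (Rpower r (/ 2)).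
    rewrite Rpower_sqrt by lra. right; unfold Rdiv; ring.
Qed.

Lemma ex_series_sqrt_telescoping (r : nat -> R) (C : R) : 0 <= C ->
  (forall n, 0 <= r (S n) <= r n) ->
  ex_series (fun n => C * (sqrt (r n) - sqrt (r (S n)))).
Proof.
  intros HC Hr.
  assert (Hsum : forall n, sum_n (fun n => C * (sqrt (r n) - sqrt (r (S n)))) n
                           = C * (sqrt (r O) - sqrt (r (S n)))).
  { induction n; [rewrite sum_O; reflexivity|].
    rewrite sum_Sn, IHn; unfold plus; simpl; ring. }
  assert (Hterm : forall n, 0 <= C * (sqrt (r n) - sqrt (r (S n)))).
  { intros n; apply Rmult_le_pos; [exact HC|].
    pose proof (sqrt_le_1_alt _ _ (proj2 (Hr n))); lra. }
  destruct (ex_finite_lim_seq_incr (sum_n (fun n => C * (sqrt (r n) - sqrt (r (S n)))))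
              (C * sqrt (r O))) as [l Hl].
  - intros n; rewrite sum_Sn; unfold plus; simpl; pose proof (Hterm (S n)); lra.
  - intros n; rewrite Hsum; pose proof (sqrt_pos (r (S n))); nra.
  - exists l; exact Hl.
Qed.

(* Each term [(r_n - r_(n+1))^s] is dominated by [2 B^(s-1) (sqrt r_n - sqrt r_(n+1))]. *)
Lemma ex_series_Rpower_gaps (r : nat -> R) (B : R) (P : nat) :
  (1 <= P)%nat -> 0 < B ->
  (forall n, 0 < r (S n) <= r n) ->
  (forall n, B * r n ^ P <= r n - r (S n)) ->
  ex_series (fun n => Rpower (r n - r (S n)) (1 - / (2 * INR P))).
Proof.
  intros HP HB Hr Hgap.
  set (C := Rpower B (- / (2 * INR P)) * 2).
  apply (@ex_series_le R_AbsRing R_CompleteNormedModule _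
           (fun n => C * (sqrt (r n) - sqrt (r (S n))))).
  - intros n.
    change (norm ?x) with (Rabs x).
    rewrite Rabs_pos_eq by (unfold Rpower; left; apply exp_pos).
    pose proof (Hr n).
    eapply Rle_trans; [apply (Rpower_le_of_power_lower_bound _ (r n) B P); auto; lra|].
    unfold C; rewrite Rmult_assoc.
    apply Rmult_le_compat_l; [unfold Rpower; left; apply exp_pos|].
    apply gap_div_sqrt_le; lra.
  - apply ex_series_sqrt_telescoping; [unfold C, Rpower; pose proof (exp_pos (- / (2 * INR P) * ln B)); lra|].
    intros n; pose proof (Hr n); lra.
Qed.

Lemma eventually_le_of_step_down (r : nat -> R) (x1 d : R) :
  0 < d -> (forall n, 0 <= r n) -> (forall n, x1 < r n -> r (S n) <= r n - d) ->
  exists K, r K <= x1.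
Proof.
  intros Hd Hr Hstep.
  apply Classical_Prop.NNPP; intros Hnot.
  assert (Habove : forall n, x1 < r n).
  { intros n; apply Rnot_le_lt; intros H; apply Hnot; exists n; exact H. }
  assert (Hlin : forall n, r n <= r O - INR n * d).
  { induction n; [simpl; lra|]. rewrite S_INR. pose proof (Hstep n (Habove n)); lra. }
  destruct (nfloor_ex (r O / d)) as [N HN]; [apply Rdiv_le_0_compat; auto|].
  destruct HN as [_ HN]; apply (Rmult_lt_compat_r d) in HN; [|exact Hd].
  unfold Rdiv in HN; rewrite Rmult_assoc, Rinv_l, Rmult_1_r in HN by lra.
  pose proof (Hlin (S N)); pose proof (Hr (S N)); rewrite S_INR in *; lra.
Qed.

Section Abscissa.

Variables (a u : R -> R) (B x1 : R) (P : nat).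
Hypothesis a_maps : forall x, 0 <= x <= 1 -> 0 <= a x <= 1.
Hypothesis a_pos : forall x, 0 < x <= 1 -> 0 < a x.
Hypothesis a_eq : forall x, 0 <= x <= 1 -> a x = x - u x.
Hypothesis u_mono : forall x y, 0 <= x -> x <= y -> y <= 1 -> u x <= u y.
Hypothesis P_pos : (1 <= P)%nat.
Hypothesis B_pos : 0 < B.
Hypothesis x1_bounds : 0 < x1 <= 1.
Hypothesis u_lower : forall x, 0 <= x <= x1 -> B * x ^ P <= u x.

Lemma q_pos k : 0 < q a k.
Proof.
  induction k; [unfold q; simpl; lra|].
  change (0 < a (q a k)); apply a_pos; pose proof (q_bounds a a_maps k); lra.
Qed.

Lemma q_S_eq k : q a (S k) = q a k - u (q a k).
Proof. apply a_eq, q_bounds, a_maps. Qed.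

Lemma u_nonneg x : 0 <= x <= 1 -> 0 <= u x.
Proof.
  intros Hx; pose proof (u_lower 0 ltac:(lra)); pose proof (u_mono 0 x ltac:(lra) ltac:(lra) ltac:(lra)).
  rewrite pow_i in * by lia; lra.
Qed.

Lemma q_decr k : q a (S k) <= q a k.
Proof. rewrite q_S_eq; pose proof (u_nonneg _ (q_bounds a a_maps k)); lra. Qed.

(* Above [x1] each step of [a] moves left by at least [u x1 >= B x1^P]. *)
Lemma q_eventually_le : exists K, forall k, q a (K + k) <= x1.
Proof.
  destruct (eventually_le_of_step_down (q a) x1 (B * x1 ^ P)) as [K HK].
  - apply Rmult_lt_0_compat; [lra|apply pow_lt; lra].
  - intros n; apply q_bounds, a_maps.
  - intros n Hn; rewrite q_S_eq.
    pose proof (u_lower x1 ltac:(lra)); pose proof (q_bounds a a_maps n).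
    pose proof (u_mono x1 (q a n) ltac:(lra) ltac:(lra) ltac:(lra)); lra.
  - exists K; induction k; [rewrite Nat.add_0_r; exact HK|].
    rewrite Nat.add_succ_r; pose proof (q_decr (K + k)); lra.
Qed.

Lemma abscissa_J_lt_1 : Rbar_lt (abscissa_J a) 1.
Proof.
  destruct q_eventually_le as [K HK].
  assert (Hs : 1 - / (2 * INR P) < 1).
  { assert (1 <= INR P) by (apply (le_INR 1); lia).
    assert (0 < / (2 * INR P)) by (apply Rinv_0_lt_compat; lra); lra. }
  apply Rbar_le_lt_trans with (Finite (1 - / (2 * INR P))); [|exact Hs].
  apply (proj1 (Glb_Rbar_correct _)).
  apply (ex_series_incr_n _ K).
  eapply ex_series_ext;
    [|apply (ex_series_Rpower_gaps (fun k => q a (K + k)) B P); auto].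
  - intros k; unfold J_len; rewrite Nat.add_succ_r.
    replace (S (K + k) - 1)%nat with (K + k)%nat by lia; reflexivity.
  - intros k; rewrite Nat.add_succ_r; split; [apply q_pos|apply q_decr].
  - intros k; rewrite Nat.add_succ_r, q_S_eq.
    replace (q a (K + k) - (q a (K + k) - u (q a (K + k)))) with (u (q a (K + k))) by ring.
    apply u_lower; split; [left; apply q_pos|apply HK].
Qed.

End Abscissa.

Lemma at_right_0_interval (P : R -> Prop) :
  at_right 0 P -> exists del, 0 < del /\ forall y, 0 < y < del -> P y.
Proof.
  intros [del Hd]; exists del; split; [apply cond_pos|].
  intros y Hy; apply Hd; [|lra].
  unfold ball; simpl; unfold AbsRing_ball, abs, minus, plus, opp; simpl.
  rewrite Ropp_0, Rplus_0_r, Rabs_pos_eq; lra.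
Qed.

Lemma pow_le_Rpower (t gamma : R) (N : nat) :
  0 < t <= 1 -> gamma <= INR N -> t ^ N <= Rpower t gamma.
Proof.
  intros Ht Hg; rewrite <- Rpower_pow by lra; unfold Rpower.
  apply exp_le_exp.
  assert (ln t <= 0) by (rewrite <- ln_1; apply ln_le; lra).
  nra.
Qed.

(* [x V'(x) < V(x)] near [0] makes [V(x)/x] nonincreasing there. *)
Lemma SV0_star_lower_linear (V : R -> R) : SV0_star V ->
  exists C x1, 0 < C /\ 0 < x1 <= 1 /\ forall t, 0 < t <= x1 -> C * t <= V t.
Proof.
  intros [Vpos [[eV [HeV HV]] [_ Hlim]]].
  destruct (at_right_0_interval _
    (proj1 (filterlim_locally _ 0) Hlim (mkposreal 1 Rlt_0_1))) as [del [Hdel Hball]].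
  set (x1 := Rmin (del / 2) (1 / 2)).
  assert (Hx1 : 0 < x1 <= 1 / 2) by (unfold x1; split; [apply Rmin_glb_lt; lra|apply Rmin_r]).
  assert (Hx1d : x1 < del) by (unfold x1; pose proof (Rmin_l (del / 2) (1 / 2)); lra).
  assert (Hsmall : forall y, 0 < y <= x1 -> y * Derive V y < V y).
  { intros y Hy; specialize (Hball y ltac:(lra)).
    unfold ball in Hball; simpl in Hball; unfold AbsRing_ball, abs, minus, plus, opp in Hball; simpl in Hball.
    rewrite Ropp_0, Rplus_0_r in Hball; apply Rabs_def2 in Hball.
    pose proof (Vpos y ltac:(lra)).
    destruct Hball as [Hb _]. apply (Rmult_lt_compat_r (V y)) in Hb; auto.
    unfold Rdiv in Hb; rewrite Rmult_assoc, Rinv_l, Rmult_1_r, Rmult_1_l in Hb by lra; exact Hb. }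
  exists (V x1 / x1), x1; split; [apply Rdiv_lt_0_compat; [apply Vpos|]; lra|split; [lra|]].
  intros t Ht.
  destruct (mean_value (fun y => V y / y) (fun y => (Derive V y * y - V y * 1) / y ^ 2) t x1)
    as [xi [Hxi Heq]]; [lra| |].
  - intros y Hy; apply is_derive_div; [apply Derive_correct, HV; lra|auto_derive; auto|lra].
  - assert (Hd : (Derive V xi * xi - V xi * 1) / xi ^ 2 <= 0).
    { pose proof (Hsmall xi ltac:(lra)); unfold Rdiv; apply Rmult_le_0_r; [lra|].
      left; apply Rinv_0_lt_compat, pow_lt; lra. }
    assert (V x1 / x1 <= V t / t) by nra.
    apply (Rmult_le_reg_r (/ t)); [apply Rinv_0_lt_compat; lra|].
    replace (V x1 / x1 * t * / t) with (V x1 / x1) by (field; lra); exact H.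
Qed.

Lemma power_lower_bound_of_derive (u : R -> R) (C x1 : R) (n : nat) :
  u 0 = 0 -> (forall t, 0 <= t <= x1 -> ex_derive u t) ->
  (forall t, 0 <= t <= x1 -> C * t ^ n <= Derive u t) ->
  forall x, 0 <= x <= x1 -> C / INR (S n) * x ^ S n <= u x.
Proof.
  intros Hu0 Hu Hdu x Hx.
  assert (Hn : INR (S n) <> 0) by (apply not_0_INR; lia).
  set (h := fun y => u y - C / INR (S n) * y ^ S n).
  assert (Hmono : h 0 <= h x).
  { apply (nondecreasing_of_derive_nonneg h (fun y => Derive u y - C * y ^ n) 0 x1); try lra.
    - intros y Hy; unfold h.
      apply (is_derive_ext (fun y => u y - C / INR (S n) * y ^ S n)); [reflexivity|].
      replace (Derive u y - C * y ^ n) with (Derive u y - C / INR (S n) * (INR (S n) * 1 * y ^ Nat.pred (S n)))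
        by (simpl; field; exact Hn).
      apply (is_derive_minus u (fun y => C / INR (S n) * y ^ S n)); [apply Derive_correct, Hu, Hy|].
      apply (is_derive_scal (fun y => y ^ S n)), (is_derive_pow (fun y => y)); auto_derive; auto.
    - intros y Hy; pose proof (Hdu y Hy); lra. }
  unfold h in Hmono; rewrite Hu0, pow_i in Hmono by lia; lra.
Qed.

Lemma DRIS_u_lower_power (u V : R -> R) (gamma : R) : 0 < gamma ->
  C2_on_01 u -> u 0 = 0 -> Derive u 0 = 0 -> SV0_star V ->
  (forall x, 0 < x <= 1 -> Derive u x = Rpower x gamma * V x) ->
  exists B x1 P, (1 <= P)%nat /\ 0 < B /\ 0 < x1 <= 1 /\
    forall x, 0 <= x <= x1 -> B * x ^ P <= u x.
Proof.
  intros Hg [eu [Heu Hu]] Hu0 Hdu0 HV Hdu.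
  destruct (SV0_star_lower_linear V HV) as (C & x1 & HC & Hx1 & HVlow).
  destruct (nfloor_ex gamma) as [N0 HN0]; [lra|].
  assert (HN : gamma <= INR (S N0)) by (rewrite S_INR; lra).
  exists (C / INR (S (S (S N0)))), x1, (S (S (S N0))).
  split; [lia|split; [apply Rdiv_lt_0_compat; [lra|apply lt_0_INR; lia]|split; [lra|]]].
  apply power_lower_bound_of_derive; [exact Hu0|intros t Ht; apply Hu; lra|].
  intros t Ht; destruct (Req_dec t 0) as [->|Ht0].
  - rewrite Hdu0, pow_i by lia; lra.
  - rewrite Hdu by lra.
    pose proof (pow_le_Rpower t gamma (S N0) ltac:(lra) HN).
    pose proof (HVlow t ltac:(lra)). pose proof (pow_le t (S N0) ltac:(lra)).
    pose proof (Rmult_le_pos C t ltac:(lra) ltac:(lra)).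
    replace (C * t ^ S (S N0)) with (t ^ S N0 * (C * t)) by (simpl; ring).
    apply Rmult_le_compat; lra.
Qed.

Lemma continuity_pt_ge_right (f : R -> R) (x0 d l : R) :
  continuity_pt f x0 -> 0 < d -> (forall x, x0 < x <= x0 + d -> l <= f x) -> l <= f x0.
Proof.
  intros Hc Hd Hl; apply Rnot_lt_le; intros Hlt.
  destruct (Hc (l - f x0) ltac:(lra)) as [del [Hdel Hball]].
  set (y := x0 + Rmin (del / 2) d).
  assert (Hy : 0 < Rmin (del / 2) d <= d) by (split; [apply Rmin_glb_lt; lra|apply Rmin_r]).
  assert (Hyd : Rmin (del / 2) d <= del / 2) by apply Rmin_l.
  specialize (Hball y); simpl in Hball; unfold R_dist in Hball.
  assert (Hfy : Rabs (f y - f x0) < l - f x0).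
  { apply Hball; split; [split; [exact I|apply Rlt_not_eq; unfold y; lra]|].
    unfold y; rewrite Rabs_pos_eq; lra. }
  pose proof (Hl y ltac:(unfold y; lra)). apply Rabs_def2 in Hfy; lra.
Qed.

Lemma lipschitz_of_derive_bounded (f df : R -> R) (lo hi M : R) :
  (forall x, lo <= x <= hi -> is_derive f x (df x)) ->
  (forall x, lo <= x <= hi -> Rabs (df x) <= M) ->
  forall p r, lo <= p <= hi -> lo <= r <= hi -> Rabs (f p - f r) <= M * Rabs (p - r).
Proof.
  intros Hd HM.
  assert (Hle : forall p r, lo <= r -> r <= p -> p <= hi -> Rabs (f p - f r) <= M * Rabs (p - r)).
  { intros p r H1 H2 H3.
    destruct (mean_value f df r p H2) as [xi [Hxi ->]]; [intros x Hx; apply Hd; lra|].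
    rewrite Rabs_mult; apply Rmult_le_compat_r; [apply Rabs_pos|apply HM; lra]. }
  intros p r Hp Hr; destruct (Rle_dec r p); [apply Hle; lra|].
  rewrite (Rabs_minus_sym (f p)), (Rabs_minus_sym p); apply Hle; lra.
Qed.

Section C2Functions.

Variable f : R -> R.
Hypothesis f_C2 : C2_on_01 f.

Lemma C2_on_01_is_derive x : 0 <= x <= 1 -> is_derive f x (Derive f x).
Proof.
  destruct f_C2 as [eps [Heps Hf]]; intros Hx.
  apply Derive_correct, (Hf x); lra.
Qed.

Lemma C2_on_01_Derive_continuous x : 0 <= x <= 1 -> continuity_pt (Derive f) x.
Proof.
  destruct f_C2 as [eps [Heps Hf]]; intros Hx.
  apply continuity_pt_filterlim, (ex_derive_continuous (Derive f)), (Hf x); lra.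
Qed.

Lemma C2_on_01_Derive_lipschitz : exists M, 0 <= M /\
  forall p r, 0 <= p <= 1 -> 0 <= r <= 1 -> Rabs (Derive f p - Derive f r) <= M * Rabs (p - r).
Proof.
  destruct f_C2 as [eps [Heps Hf]].
  assert (Hcont : forall x, 0 <= x <= 1 -> continuity_pt (fun x => Rabs (Derive (Derive f) x)) x).
  { intros x Hx; apply (continuity_pt_comp (Derive (Derive f)) Rabs); [|apply Rcontinuity_abs].
    apply continuity_pt_filterlim, (Hf x); lra. }
  destruct (continuity_ab_maj _ 0 1 ltac:(lra) Hcont) as [xM [HM _]].
  exists (Rabs (Derive (Derive f) xM)); split; [apply Rabs_pos|].
  apply (lipschitz_of_derive_bounded _ (Derive (Derive f))); [|exact HM].
  intros x Hx; apply Derive_correct, (Hf x); lra.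
Qed.

End C2Functions.

Section DRISystem.

Variables (c : R) (a b : R -> R).
Hypothesis a_b_DRI : is_DRI c a b.

Let DR : is_DR c a b := proj1 a_b_DRI.

Lemma DRI_c_bounds : 0 < c < 1.
Proof. apply DR. Qed.

Lemma DRI_a_maps x : 0 <= x <= 1 -> 0 <= a x <= 1.
Proof.
  destruct DR as (Hc & _ & _ & [Ha _] & _); intros Hx; pose proof (Ha x Hx); lra.
Qed.

Lemma DRI_b_maps x : 0 <= x <= 1 -> c <= b x <= 1.
Proof. destruct DR as (_ & _ & _ & _ & [Hb _] & _); apply Hb. Qed.

Lemma DRI_a_1 : a 1 = c.
Proof. apply DR. Qed.

Lemma DRI_a_mono x y : 0 <= x <= 1 -> 0 <= y <= 1 -> x <= y -> a x <= a y.
Proof.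
  destruct DR as (_ & _ & _ & _ & _ & Hmono & _); intros Hx Hy [Hlt|<-]; [|lra].
  left; apply Hmono; auto.
Qed.

Lemma DRI_a_pos x : 0 < x <= 1 -> 0 < a x.
Proof.
  destruct DR as (_ & _ & _ & _ & _ & Hmono & _ & Ha0 & _); intros Hx.
  rewrite <- Ha0; apply Hmono; lra.
Qed.

Lemma DRI_a_deriv x : 0 <= x <= 1 -> is_derive a x (Derive a x).
Proof. apply C2_on_01_is_derive, DR. Qed.

Lemma DRI_b_deriv x : 0 <= x <= 1 -> is_derive b x (Derive b x).
Proof. apply C2_on_01_is_derive, DR. Qed.

Lemma DRI_Derive_a_bounds x : 0 <= x <= 1 -> 0 < Derive a x <= 1.
Proof.
  destruct DR as (_ & _ & _ & _ & _ & _ & _ & _ & _ & _ & _ & Hsign & Hlt1); intros Hx.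
  pose proof (Hsign x Hx); destruct (Req_dec x 0) as [->|Hx0].
  - rewrite (proj2 a_b_DRI); lra.
  - pose proof (Hlt1 x ltac:(lra)); lra.
Qed.

(* At [0] only [b'(0) >= -1] holds, by continuity of [b']. *)
Lemma DRI_Derive_b_bounds x : 0 <= x <= 1 -> -1 <= Derive b x < 0.
Proof.
  destruct DR as (_ & _ & Hb2 & _ & _ & _ & _ & _ & _ & _ & _ & Hsign & Hlt1); intros Hx.
  pose proof (Hsign x Hx); split; [|lra].
  destruct (Req_dec x 0) as [->|Hx0]; [|pose proof (Hlt1 x ltac:(lra)); lra].
  apply (continuity_pt_ge_right _ 0 1); [apply C2_on_01_Derive_continuous; auto; lra|lra|].
  intros y Hy; pose proof (Hlt1 y ltac:(lra)); lra.
Qed.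

(* Strict contraction on [c, 1]: [c > 0] keeps this compact interval away from [0], where
   [a'] may reach [1]. *)
Lemma DRI_contraction : exists th, th < 1 /\
  forall x, c <= x <= 1 -> Derive a x <= th /\ - Derive b x <= th.
Proof.
  destruct DR as (Hc & Ha2 & Hb2 & _ & _ & _ & _ & _ & _ & _ & _ & _ & Hlt1).
  assert (Hcont : forall f, C2_on_01 f -> forall x, c <= x <= 1 -> continuity_pt (Derive f) x).
  { intros f Hf x Hx; apply C2_on_01_Derive_continuous; auto; lra. }
  destruct (continuity_ab_maj _ c 1 ltac:(lra) (Hcont a Ha2)) as [xa [Hxa Hxa01]].
  destruct (continuity_ab_min _ c 1 ltac:(lra) (Hcont b Hb2)) as [xb [Hxb Hxb01]].
  pose proof (Hlt1 xa ltac:(lra)); pose proof (Hlt1 xb ltac:(lra)).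
  exists (Rmax (Derive a xa) (- Derive b xb)); split; [apply Rmax_lub_lt; lra|].
  intros x Hx; pose proof (Hxa x Hx); pose proof (Hxb x Hx).
  pose proof (Rmax_l (Derive a xa) (- Derive b xb)); pose proof (Rmax_r (Derive a xa) (- Derive b xb)).
  split; lra.
Qed.

Lemma DRI_Derive_a_log_lipschitz : exists K, 0 <= K /\
  forall p r, 0 <= p <= 1 -> 0 <= r <= 1 -> Derive a p <= Derive a r * exp (K * Rabs (p - r)).
Proof.
  destruct (C2_on_01_Derive_lipschitz a (proj1 (proj2 DR))) as [M [HM Hlip]].
  destruct (continuity_ab_min (Derive a) 0 1 ltac:(lra)) as [xal [Hal Hal01]].
  { intros x Hx; apply C2_on_01_Derive_continuous; [apply DR|exact Hx]. }
  pose proof (DRI_Derive_a_bounds xal Hal01).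
  exists (M / Derive a xal); split; [apply Rdiv_le_0_compat; lra|].
  apply (log_lipschitz_of_lipschitz _ (fun x => 0 <= x <= 1)); auto; lra.
Qed.

Lemma DRI_Derive_b_away_from_0 : exists beta, 0 < beta /\
  forall x, 0 <= x <= 1 -> beta <= - Derive b x <= 1.
Proof.
  destruct (continuity_ab_maj (Derive b) 0 1 ltac:(lra)) as [xbe [Hbe Hbe01]].
  { intros x Hx; apply C2_on_01_Derive_continuous; [apply DR|exact Hx]. }
  pose proof (DRI_Derive_b_bounds xbe Hbe01).
  exists (- Derive b xbe); split; [lra|].
  intros x Hx; pose proof (Hbe x Hx); pose proof (DRI_Derive_b_bounds x Hx); lra.
Qed.

Lemma DRI_eta_limsup_lt_1 : Rbar_lt (Rbar_limsup (eta a b)) 1.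
Proof.
  destruct DRI_contraction as [th [Hth1 Hth]].
  apply Rbar_le_lt_trans with (Finite th); [|exact Hth1].
  apply (Rbar_limsup_le _ 2); intros n Hn.
  apply (eta_le_th a b (Derive a) (Derive b) c); auto using DRI_a_maps, DRI_b_maps,
    DRI_a_deriv, DRI_b_deriv, DRI_Derive_a_bounds, DRI_Derive_b_bounds.
  - pose proof DRI_c_bounds; lra.
  - apply Hth.
  - apply Hth.
Qed.

Lemma DRI_g_bounded_distortion : exists L : R, 1 <= L /\
  forall (m : nat) (x y : R), (1 <= m)%nat -> 0 <= x <= 1 -> 0 <= y <= 1 ->
    / L <= Rabs (Derive (g a b m) x / Derive (g a b m) y) <= L.
Proof.
  destruct DRI_Derive_a_log_lipschitz as [K [HK Hlog]].
  destruct DRI_Derive_b_away_from_0 as [beta [Hbeta Hb]].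
  apply (g_bounded_distortion a b (Derive a) (Derive b) c K beta); auto using DRI_a_maps,
    DRI_a_mono, DRI_a_1, DRI_b_maps, DRI_a_deriv, DRI_b_deriv.
  intros x Hx; apply DRI_Derive_a_bounds, Hx.
Qed.

End DRISystem.

Lemma DRIS_abscissa_J_lt_1 (gamma c : R) (a b : R -> R) :
  0 < gamma -> is_DRIS gamma c a b -> Rbar_lt (abscissa_J a) 1.
Proof.
  intros Hg [HDRI (u & V & Hau & Hu2 & Hu0 & Hdu0 & Hdu01 & HV & Hdu)].
  destruct (DRIS_u_lower_power u V gamma Hg Hu2 Hu0 Hdu0 HV Hdu) as (B & x1 & P & HP & HB & Hx1 & Hlow).
  apply (abscissa_J_lt_1 a u B x1 P); auto.
  - intros x Hx; apply (DRI_a_maps c a b HDRI x Hx).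
  - intros x Hx; apply (DRI_a_pos c a b HDRI x Hx).
  - intros x y Hx Hxy Hy.
    apply (nondecreasing_of_derive_nonneg u (Derive u) 0 1); auto; [|intros z Hz; apply Hdu01, Hz].
    intros z Hz; apply C2_on_01_is_derive; auto.
Qed.

Theorem theorem7p1 (gamma c : R) (a b : R -> R) :
  0 < gamma -> is_DRIS gamma c a b ->
  good_class a b /\ is_DRBGC c a b.
Proof.
  intros Hg HDRIS.
  assert (HDRI : is_DRI c a b) by apply HDRIS.
  assert (Hgood : good_class a b).
  { split; [exact (DRIS_abscissa_J_lt_1 gamma c a b Hg HDRIS)|].
    split; [exact (DRI_eta_limsup_lt_1 c a b HDRI)|exact (DRI_g_bounded_distortion c a b HDRI)]. }
  exact (conj Hgood (conj HDRI Hgood)).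
Qed.
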